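(* Let $m$ be a positive integer and for $n\ge0$ let \[ G_n^{(m)}(q)=\sum_{0\leq k_m\leq\dots\leq k_1\leq n}q^{-2k_m}q^{\sum_{j=1}^m(k_j^2+2k_j)} \frac{(q)_n^2}{(q)_{k_m}^2(q)_{n-k_1}\prod_{j=1}^{m-1}(q)_{k_j-k_{j+1}}} \cdot\frac{(1-q^{n+1})(1-q^{n+2})}{(1-q^{n-k_m+1})(1-q^{n-k_m+2})}\in\mathbb{Z}[[q]]. \] Then for every $n\ge 0$, \[ G_n^{(m)}(q)\equiv(q)_{\infty}\sum_{0\leq k_m\leq\dots\leq k_2\leq k_1}\frac{q^{-2k_m}q^{\sum_{j=1}^m(k_j^2+2k_j)}}{(q)_{k_m}^2(q)_{k_1-k_2}\cdots(q)_{k_{m-1}-k_m}}\pmod{q^{n+1}\mathbb{Z}[[q]]}. \]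
   Context: $(q)_k=\prod_{l=1}^{k}(1-q^l)$ for $k\ge0$, $(q)_0=1$, $(q)_\infty=\prod_{l\ge1}(1-q^l)$; rational functions are expanded as power series in $q$; empty products equal $1$. *)

(* Formal power series over Z are modelled as coefficient
   functions nat -> int, with the Cauchy product. *)
From HB Require Import structures.
From mathcomp Require Import all_boot all_order all_algebra.
Set Implicit Arguments. Unset Strict Implicit. Unset Printing Implicit Defensive.
Import Order.TTheory GRing.Theory Num.Theory.
Local Open Scope ring_scope.

Definition ps := nat -> int.
Definition ps_zero : ps := fun _ => 0.
Definition ps_one : ps := fun d => if d == 0%N then 1 else 0.
Definition ps_add (f g : ps) : ps := fun d => f d + g d.
Definition ps_mul (f g : ps) : ps := fun d => \sum_(i < d.+1) f i * g (d - i)%N.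
Definition ps_mon (e : nat) : ps := fun d => if d == e then 1 else 0.
Definition ps_of_poly (p : {poly int}) : ps := fun d => p`_d.
(* the expansion of 1/(1 - q^l) (used only for l >= 1) *)
Definition ps_geom (l : nat) : ps := fun d => if (l %| d)%N then 1 else 0.

Definition qpoch (k : nat) : {poly int} := \prod_(1 <= l < k.+1) (1 - 'X^l).
Definition qpoch_inv (k : nat) : ps := \big[ps_mul/ps_one]_(1 <= l < k.+1) ps_geom l.

(* q-adic (coefficientwise eventually constant) limit *)
Definition ps_lim (F : nat -> ps) (S : ps) : Prop :=
  forall d, exists N, forall M, (N <= M)%N -> F M d = S d.
(* f = g mod q^{n+1} Z[[q]] *)
Definition ps_congr (n : nat) (f g : ps) : Prop :=
  forall d, (d <= n)%N -> f d = g d.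

(* tuples (k_1,...,k_m) are stored 0-based: k j = k_{j+1}, j < m *)
Definition kfun (m B : nat) (k : {ffun 'I_m -> 'I_B}) (j : nat) : nat :=
  if (insub j : option 'I_m) is Some i then val (k i) else 0%N.
Definition mono (m B : nat) (k : {ffun 'I_m -> 'I_B}) : bool :=
  [forall i : 'I_m, forall j : 'I_m, (i <= j)%N ==> (k j <= k i)%N].

(* exponent -2 k_m + sum_j (k_j^2 + 2 k_j)  (always >= 0) *)
Definition expo (m : nat) (k : nat -> nat) : nat :=
  ((\sum_(j < m) (k j ^ 2 + 2 * k j)) - 2 * k m.-1)%N.

Definition Gterm (m n : nat) (k : nat -> nat) : ps :=
  ps_mul (ps_mon (expo m k))
  (ps_mul (ps_of_poly (qpoch n ^+ 2 * (1 - 'X^(n.+1)) * (1 - 'X^(n.+2))))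
  (ps_mul (ps_mul (qpoch_inv (k m.-1)) (qpoch_inv (k m.-1)))
  (ps_mul (qpoch_inv (n - k 0%N)%N)
  (ps_mul (\big[ps_mul/ps_one]_(j < m.-1) qpoch_inv (k j - k j.+1)%N)
          (ps_mul (ps_geom (n - k m.-1).+1) (ps_geom (n - k m.-1).+2)))))).

Definition Gn (m n : nat) : ps :=
  \big[ps_add/ps_zero]_(k : {ffun 'I_m -> 'I_n.+1} | mono k) Gterm m n (kfun k).

Definition Rterm (m : nat) (k : nat -> nat) : ps :=
  ps_mul (ps_mon (expo m k))
  (ps_mul (ps_mul (qpoch_inv (k m.-1)) (qpoch_inv (k m.-1)))
          (\big[ps_mul/ps_one]_(j < m.-1) qpoch_inv (k j - k j.+1)%N)).

Definition Rpartial (m N : nat) : ps :=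
  \big[ps_add/ps_zero]_(k : {ffun 'I_m -> 'I_N.+1} | mono k) Rterm m (kfun k).

(* Modulo q^(n+1) each summand of G_n^(m) can be compared with the matching
   summand of the right-hand series.  Write c = n - k_1.  Modulo q^(c+1) one has
   (q)_n^2 / (q)_c = (q)_infty, while 1 - q^(n+1), 1 - q^(n+2) and the
   denominators 1 - q^(n-k_m+1), 1 - q^(n-k_m+2) are all 1.  The summand also carries the monomial q^e with
   e >= k_1^2 >= k_1, and multiplying by q^e turns a congruence modulo q^(c+1)
   into one modulo q^(c+e+1), hence modulo q^(n+1).  The same bound shows that
   the summands with k_1 > n are 0 modulo q^(n+1), so the finite sum over
   k_1 <= n agrees with the whole series. *)
From HB Require Import structures.
From mathcomp Require Import all_boot all_order all_algebra.
From mathcomp Require Import zify.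
From Stdlib Require Import FunctionalExtensionality.
Set Implicit Arguments. Unset Strict Implicit. Unset Printing Implicit Defensive.
Import Order.TTheory GRing.Theory Num.Theory.
Local Open Scope ring_scope.

Lemma ps_ext (f g : ps) : (forall d, f d = g d) -> f = g.
Proof. by move=> H; apply: functional_extensionality. Qed.

Definition ps_trunc (N : nat) (f : ps) : {poly int} := \poly_(i < N) f i.

Lemma coef_ps_mul_trunc (f g : ps) N d :
  (d < N)%N -> ps_mul f g d = (ps_trunc N f * ps_trunc N g)`_d.
Proof.
move=> hd; rewrite coefM /ps_mul; apply: eq_bigr => i _.
rewrite /ps_trunc !coef_poly; have hi := ltn_ord i.
by rewrite (leq_ltn_trans _ hd) ?(leq_ltn_trans (leq_subr _ _) hd).
Qed.

Lemma coef_mul_low (p p' q : {poly int}) d :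
  (forall j, (j <= d)%N -> p`_j = p'`_j) -> (p * q)`_d = (p' * q)`_d.
Proof. by move=> H; rewrite !coefM; apply: eq_bigr => i _; rewrite H // -ltnS. Qed.

Lemma coef_ps_trunc_mul (f g : ps) N j :
  (j < N)%N -> (ps_trunc N (ps_mul f g))`_j = (ps_trunc N f * ps_trunc N g)`_j.
Proof. by move=> hj; rewrite coef_poly hj (coef_ps_mul_trunc _ _ hj). Qed.

Lemma ps_mulC (f g : ps) : ps_mul f g = ps_mul g f.
Proof. by apply: ps_ext => d; rewrite !(@coef_ps_mul_trunc _ _ d.+1) // mulrC. Qed.

Lemma ps_mulA (f g h : ps) : ps_mul f (ps_mul g h) = ps_mul (ps_mul f g) h.
Proof.
apply: ps_ext => d; rewrite !(@coef_ps_mul_trunc _ _ d.+1) //.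
rewrite [RHS](@coef_mul_low _ (ps_trunc d.+1 f * ps_trunc d.+1 g)); last first.
  by move=> j hj; rewrite coef_ps_trunc_mul.
rewrite [_ * ps_trunc d.+1 (ps_mul g h)]mulrC.
rewrite [LHS](@coef_mul_low _ (ps_trunc d.+1 g * ps_trunc d.+1 h)); last first.
  by move=> j hj; rewrite coef_ps_trunc_mul.
by rewrite [_ * ps_trunc d.+1 f]mulrC mulrA.
Qed.

Lemma coef_ps_mul_mon (e : nat) (f : ps) d :
  ps_mul (ps_mon e) f d = if (e <= d)%N then f (d - e)%N else 0.
Proof.
rewrite /ps_mul /ps_mon; case: ifP => he.
  rewrite (bigD1 (Ordinal (n:=d.+1) (m:=e) he)) //= eqxx mul1r big1 ?addr0 //.
  move=> i /eqP hi; suff -> : (i == e :> nat) = false by rewrite mul0r.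
  by apply/negbTE/eqP => hie; apply: hi; apply: val_inj.
rewrite big1 // => i _; suff -> : (i == e :> nat) = false by rewrite mul0r.
by apply/negbTE/eqP => hie; move: (ltn_ord i); rewrite hie ltnS he.
Qed.

Lemma ps_mul1s (f : ps) : ps_mul ps_one f = f.
Proof. by apply: ps_ext => d; rewrite (coef_ps_mul_mon 0) subn0. Qed.

HB.instance Definition _ := Monoid.isComLaw.Build ps ps_one ps_mul ps_mulA ps_mulC ps_mul1s.

Lemma ps_muls1 (f : ps) : ps_mul f ps_one = f.
Proof. by rewrite ps_mulC ps_mul1s. Qed.

Lemma ps_mulCA (f g h : ps) : ps_mul f (ps_mul g h) = ps_mul g (ps_mul f h).
Proof. by rewrite ps_mulA (ps_mulC f) -ps_mulA. Qed.

Lemma ps_of_polyM (p q : {poly int}) :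
  ps_of_poly (p * q) = ps_mul (ps_of_poly p) (ps_of_poly q).
Proof. by apply: ps_ext => d; rewrite /ps_of_poly coefM. Qed.

Lemma ps_of_poly1 : ps_of_poly 1 = ps_one.
Proof. by apply: ps_ext => d; rewrite /ps_of_poly coef1 /ps_one; case: (d == 0%N). Qed.

Lemma ps_of_poly_prod (I : Type) (r : seq I) (P : pred I) (F : I -> {poly int}) :
  ps_of_poly (\prod_(i <- r | P i) F i) =
  \big[ps_mul/ps_one]_(i <- r | P i) ps_of_poly (F i).
Proof. exact: (big_morph ps_of_poly ps_of_polyM ps_of_poly1). Qed.

Lemma coef_ps_sum (T : finType) (P : pred T) (F : T -> ps) d :
  (\big[ps_add/ps_zero]_(k | P k) F k) d = \sum_(k | P k) F k d.
Proof. exact: (big_morph (fun f : ps => f d)). Qed.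

Lemma coef_ps_mul_sumr (f : ps) (T : finType) (P : pred T) (F : T -> ps) d :
  ps_mul f (\big[ps_add/ps_zero]_(k | P k) F k) d = \sum_(k | P k) ps_mul f (F k) d.
Proof.
rewrite /ps_mul [RHS]exchange_big /=; apply: eq_bigr => i _.
by rewrite coef_ps_sum mulr_sumr.
Qed.

Lemma ps_congr_mul d f f' g g' : ps_congr d f f' -> ps_congr d g g' ->
  ps_congr d (ps_mul f g) (ps_mul f' g').
Proof.
move=> hf hg i hi; rewrite /ps_mul; apply: eq_bigr => j _.
have hj : (j <= i)%N by rewrite -ltnS.
by rewrite hf ?hg //; [exact: leq_trans (leq_subr _ _) hi | exact: leq_trans hj hi].
Qed.

Lemma ps_congr_mul_mon e c n f g : (n <= c + e)%N -> ps_congr c f g ->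
  ps_congr n (ps_mul (ps_mon e) f) (ps_mul (ps_mon e) g).
Proof.
move=> hn hfg d hd; rewrite !coef_ps_mul_mon; case: ifP => // he.
by apply: hfg; lia.
Qed.

Lemma ps_congr_prod1 d (I : Type) (r : seq I) (P : pred I) (F : I -> ps) :
  (forall i, P i -> ps_congr d (F i) ps_one) ->
  ps_congr d (\big[ps_mul/ps_one]_(i <- r | P i) F i) ps_one.
Proof.
move=> hF; apply: (big_ind (fun f => ps_congr d f ps_one)) => // f g hf hg.
by rewrite -(ps_mul1s ps_one); apply: ps_congr_mul.
Qed.

Lemma ps_of_poly_1subXn l : ps_of_poly (1 - 'X^l) = fun i => ps_one i - ps_mon l i.
Proof.
apply: ps_ext => i; rewrite /ps_of_poly coefB coef1 coefXn /ps_one /ps_mon.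
by case: (i == 0%N); case: (i == l).
Qed.

Lemma ps_congr_1subXn d l : (d < l)%N -> ps_congr d (ps_of_poly (1 - 'X^l)) ps_one.
Proof.
move=> hl i hi; rewrite ps_of_poly_1subXn /ps_mon.
have -> : (i == l) = false by apply/negbTE/eqP; lia.
by rewrite subr0.
Qed.

Lemma ps_congr_geom d l : (d < l)%N -> ps_congr d (ps_geom l) ps_one.
Proof.
move=> hl [|i] hi; rewrite /ps_geom /ps_one ?dvdn0 //.
by have -> : (l %| i.+1)%N = false by apply/negbTE/negP => /dvdn_leq; lia.
Qed.

Lemma ps_geomK l : (0 < l)%N -> ps_mul (ps_of_poly (1 - 'X^l)) (ps_geom l) = ps_one.
Proof.
move=> hl; apply: ps_ext => d.
have -> : ps_mul (ps_of_poly (1 - 'X^l)) (ps_geom l) d =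
    ps_mul ps_one (ps_geom l) d - ps_mul (ps_mon l) (ps_geom l) d.
  by rewrite ps_of_poly_1subXn /ps_mul -sumrB; apply: eq_bigr => i _; rewrite mulrBl.
rewrite ps_mul1s coef_ps_mul_mon /ps_geom /ps_one.
case: d => [|d]; first by rewrite dvdn0 leqn0 (gtn_eqF hl) subr0.
case hle: (l <= d.+1)%N => /=; first by rewrite dvdn_subl ?dvdnn //; case: (l %| d.+1)%N.
have -> : (l %| d.+1)%N = false by apply/negbTE/negP => /dvdn_leq; lia.
by rewrite subrr.
Qed.

Lemma qpochK k : ps_mul (ps_of_poly (qpoch k)) (qpoch_inv k) = ps_one.
Proof.
rewrite /qpoch /qpoch_inv ps_of_poly_prod -big_split /= big_nat_cond.
by apply: big1 => l /andP[/andP[hl _] _]; apply: ps_geomK.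
Qed.

Lemma qpoch_congr d N M : (d <= N)%N -> (N <= M)%N ->
  ps_congr d (ps_of_poly (qpoch M)) (ps_of_poly (qpoch N)).
Proof.
move=> hdN hNM; rewrite /qpoch (@big_cat_nat _ _ _ N.+1) // ps_of_polyM.
rewrite -[X in ps_congr _ _ X]ps_muls1; apply: ps_congr_mul => //.
rewrite ps_of_poly_prod big_nat_cond; apply: ps_congr_prod1 => l /andP[/andP[hl _] _].
exact/ps_congr_1subXn/(leq_ltn_trans hdN).
Qed.

(* Coefficient d of (q)_infty is already that of (q)_d. *)
Definition qpoch_inf : ps := fun d => ps_of_poly (qpoch d) d.

Lemma ps_lim_qpoch : ps_lim (fun N => ps_of_poly (qpoch N)) qpoch_inf.
Proof. by move=> d; exists d => M hM; rewrite (@qpoch_congr d d M). Qed.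

Lemma qpoch_congr_inf N : ps_congr N (ps_of_poly (qpoch N)) qpoch_inf.
Proof. by move=> i hi; rewrite /qpoch_inf (@qpoch_congr i i N). Qed.

Lemma qpoch_sqr_div_congr n c : (c <= n)%N ->
  ps_congr c
    (ps_mul (ps_of_poly (qpoch n ^+ 2 * (1 - 'X^(n.+1)) * (1 - 'X^(n.+2))))
            (qpoch_inv c))
    qpoch_inf.
Proof.
move=> hc; have hqinf : ps_congr c (ps_of_poly (qpoch n)) qpoch_inf.
  by move=> i hi; apply: qpoch_congr_inf; apply: leq_trans hi hc.
(* (q)_n^2 = (q)_infty (q)_c and 1 - q^(n+1) = 1 - q^(n+2) = 1 modulo q^(c+1). *)
have H := ps_congr_mul (ps_congr_mul (ps_congr_mul (ps_congr_mul hqinf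
    (qpoch_congr (leqnn c) hc)) (@ps_congr_1subXn c n.+1 _))
    (@ps_congr_1subXn c n.+2 _)) (fun i _ => erefl (qpoch_inv c i)).
by rewrite -!ps_of_polyM -expr2 !ps_muls1 -ps_mulA qpochK ps_muls1 in H; apply: H; lia.
Qed.

Lemma leq_k0_expo m (k : nat -> nat) : (0 < m)%N -> (k 0%N <= expo m k)%N.
Proof.
rewrite /expo; case: m => [|[|m]] // _.
  by rewrite big_ord1 /=; nia.
rewrite big_ord_recl big_ord_recr /=.
have -> : bump 0 (@ord_max m) = m.+1 by rewrite /bump /=; lia.
nia.
Qed.

Lemma kfun_ord m B (k : {ffun 'I_m -> 'I_B}) (i : 'I_m) : kfun k i = k i.
Proof. by rewrite /kfun valK. Qed.

Lemma mono_leq_kfun0 m B (k : {ffun 'I_m -> 'I_B}) (i : 'I_m) :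
  mono k -> (k i <= kfun k 0)%N.
Proof.
have hm : (0 < m)%N by case: m k i => [|m] k [].
have -> : kfun k 0 = k (Ordinal hm) := kfun_ord k (Ordinal hm).
by move=> /forallP /(_ (Ordinal hm)) /forallP /(_ i) /implyP; apply.
Qed.

Lemma mono_kfun_bounds m B (k : {ffun 'I_m -> 'I_B.+1}) :
  (0 < m)%N -> mono k -> (kfun k m.-1 <= kfun k 0 <= B)%N.
Proof.
move=> hm hmono; have hm1 : (m.-1 < m)%N by case: m hm {k hmono}.
have -> : kfun k m.-1 = k (Ordinal hm1) := kfun_ord k (Ordinal hm1).
by rewrite mono_leq_kfun0 //= (kfun_ord k (Ordinal hm)) -ltnS ltn_ord.
Qed.

Lemma Gterm_congr m n (k : nat -> nat) : (0 < m)%N -> (k m.-1 <= k 0%N <= n)%N ->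
  ps_congr n (Gterm m n k) (ps_mul qpoch_inf (Rterm m k)).
Proof.
move=> hm /andP[hkm hk0]; rewrite /Gterm /Rterm (ps_mulCA qpoch_inf).
set c := (n - k 0%N)%N; set I2 := ps_mul (qpoch_inv _) _.
apply: (@ps_congr_mul_mon _ c); first by have := leq_k0_expo k hm; lia.
rewrite (ps_mulCA I2) ps_mulA (ps_mulA I2).
set R := ps_mul I2 _; rewrite -{2}(ps_muls1 R).
apply: ps_congr_mul; first by apply: qpoch_sqr_div_congr; apply: leq_subr.
apply: ps_congr_mul => //; rewrite -(ps_mul1s ps_one).
by apply: ps_congr_mul; apply: ps_congr_geom; lia.
Qed.

Lemma Gn_congr_Rpartial m n : (0 < m)%N ->
  ps_congr n (Gn m n) (ps_mul qpoch_inf (Rpartial m n)).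
Proof.
move=> hm d hd; rewrite /Rpartial coef_ps_mul_sumr /Gn coef_ps_sum.
by apply: eq_bigr => k hk; apply: Gterm_congr => //; apply: mono_kfun_bounds.
Qed.

Lemma Rterm_low m (k : nat -> nat) d : (0 < m)%N -> (d < k 0%N)%N -> Rterm m k d = 0.
Proof.
move=> hm hd; rewrite /Rterm coef_ps_mul_mon ifF //.
by apply/negbTE; have := leq_k0_expo k hm; lia.
Qed.

Lemma Rpartial_step m j N : (0 < m)%N -> (j <= N)%N ->
  Rpartial m N.+1 j = Rpartial m N j.
Proof.
move=> hm hj; rewrite /Rpartial !coef_ps_sum.
rewrite (bigID (fun k : {ffun 'I_m -> 'I_N.+2} => [forall i, (k i <= N)%N])) /=.
rewrite [X in _ + X]big1 ?addr0; last first.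
  move=> k /andP[hmono /forallPn [i hi]]; apply: Rterm_low => //.
  by have := mono_leq_kfun0 i hmono; lia.
pose widen (k : {ffun 'I_m -> 'I_N.+1}) : {ffun 'I_m -> 'I_N.+2} :=
  [ffun i => widen_ord (leqnSn N.+1) (k i)].
pose shrink (k : {ffun 'I_m -> 'I_N.+2}) : {ffun 'I_m -> 'I_N.+1} :=
  [ffun i => inord (k i)].
rewrite (reindex_onto widen shrink); last first.
  move=> k /andP[_ /forallP hk]; apply/ffunP => i; rewrite !ffunE.
  by apply: val_inj; rewrite /= inordK // ltnS.
apply: eq_big => [k|k _].
  have -> : mono (widen k) = mono k.
    by apply: eq_forallb => i; apply: eq_forallb => i'; rewrite !ffunE.
  have -> : [forall i, (widen k i <= N)%N].
    by apply/forallP => i; rewrite ffunE /= -ltnS ltn_ord.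
  have -> : shrink (widen k) == k.
    by apply/eqP/ffunP => i; rewrite !ffunE; apply: val_inj; rewrite /= inordK.
  by rewrite !andbT.
congr Rterm; apply: functional_extensionality => x; rewrite /kfun.
by case: insub => // i; rewrite ffunE.
Qed.

Lemma Rpartial_stable m j N : (0 < m)%N -> (j <= N)%N ->
  Rpartial m N j = Rpartial m j j.
Proof.
move=> hm /subnKC <-; elim: (N - j)%N => [|t IH]; first by rewrite addn0.
by rewrite addnS Rpartial_step // leq_addr.
Qed.

Definition Rseries (m : nat) : ps := fun d => Rpartial m d d.

Lemma ps_lim_Rpartial m : (0 < m)%N -> ps_lim (Rpartial m) (Rseries m).
Proof. by move=> hm d; exists d => M hM; rewrite Rpartial_stable. Qed.

Lemma Rpartial_congr m n : (0 < m)%N -> ps_congr n (Rpartial m n) (Rseries m).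
Proof. by move=> hm d hd; rewrite Rpartial_stable. Qed.

Theorem mainTheorem4 (m n : nat) (hm : (0 < m)%N) :
  exists (Qinf S : ps),
    ps_lim (fun N => ps_of_poly (qpoch N)) Qinf /\
    ps_lim (Rpartial m) S /\
    ps_congr n (Gn m n) (ps_mul Qinf S).
Proof.
exists qpoch_inf, (Rseries m); split; first exact: ps_lim_qpoch.
split; first exact: ps_lim_Rpartial.
move=> d hd; rewrite (Gn_congr_Rpartial hm hd).
exact: (ps_congr_mul (fun i _ => erefl (qpoch_inf i)) (Rpartial_congr (n:=n) hm) hd).
Qed.
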